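(* Let $n\ge1$ and let $R$ be a rook placement in $2\delta_{n-1}$. For $0\le i\le n-1$, let $R_i$ be the rook placement in $2\delta_i$ obtained by keeping only the top $i$ rows of $R$ (with their dots); so $R_0$ is empty and $R_{n-1}=R$. Then $(d(R_0),d(R_1),\dots,d(R_{n-1}))$ is an $n$-chain of Dyck shapes, i.e. $d(R_0)\sqsubset d(R_1)\sqsubset\cdots\sqsubset d(R_{n-1})$ with $d(R_{i})$ of length $2i+2$. Moreover, the map $R\mapsto (d(R_0),\dots,d(R_{n-1}))$ is a bijection between rook placements in $2\delta_{n-1}$ and $n$-chains of Dyck shapes.
   Context: The double staircase $2\delta_n$ is the Young diagram (French convention: rows drawn bottom to top, left-justified) with row lengths $2n,2n-2,\dots,2$ from bottom to top; its columns are numbered $1,\dots,2n$ from left to right; $2\delta_0$ is empty. Note that the top $i$ rows of $2\delta_{n-1}$ form a copy of $2\delta_i$. A rook placement in $2\delta_n$ is a set of dots in cells of $2\delta_n$ with exactly one dot per row and at most one per column. For such $R$, $d(R)$ is the word $w_1\cdots w_{2n+2}$ over $\{\nearrow,\searrow\}$ with $w_1=\nearrow$, $w_{2n+2}=\searrow$, and for $2\le i\le 2n+1$, $w_i=\nearrow$ iff column $i-1$ of $R$ contains a dot (so $d(R_0)=\nearrow\searrow$). A Dyck path of length $2m$ is a lattice path from $(0,0)$ to $(2m,0)$ with steps $\nearrow=(1,1)$, $\searrow=(1,-1)$ never going below the $x$-axis; write $P(x)$ for its height at abscissa $x$. A cell is a point $(a,b)\in\mathbb{Z}^2$ with $b\ge0$,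 $a+b$ even (viewed as the tilted square with vertices $(a,b),(a+1,b\pm1),(a+2,b)$). The Dyck shape of $P$ (length $2m$) is $S(P)=\{(a,b): b\ge0,\ a+b\text{ even},\ 0\le a\le 2m-2,\ b+1\le P(a+1)\}$. Cells are adjacent if they differ by $(\pm1,\pm1)$. A ribbon is a nonempty set of cells, connected for adjacency, containing no four cells $(a,b),(a+1,b+1),(a+1,b-1),(a+2,b)$. For Dyck paths $D$ of length $2m$ and $E$ of length $2m+2$, $D\sqsubset E$ means $S(D)\subseteq S(E)$ and $S(E)\setminus S(D)$ is a ribbon. An $n$-chain of Dyck shapes is a sequence $D_1\sqsubset D_2\sqsubset\cdots\sqsubset D_n$ of Dyck paths with $D_i$ of length $2i$. *)

From mathcomp Require Import all_boot all_order all_algebra.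
Set Implicit Arguments. Unset Strict Implicit. Unset Printing Implicit Defensive.
Import Order.TTheory GRing.Theory Num.Theory.

(* Steps: true = up-step (1,1), false = down-step (1,-1). *)

(** Rows are indexed from the TOP: row k (k = 0..n-1, from the top) has length
    2(k+1) (so the bottom row, k = n-1, has length 2n).  A rook placement is
    stored as the sequence s of the columns (numbered 1..) of the dots, s`_k
    being the column of the dot in row k from the top.  Exactly one dot per row
    is built in; "at most one per column" is [uniq s]. *)
Definition rook_placement (n : nat) (s : seq nat) : Prop :=
  [/\ size s = n, uniq s &
      forall k, k < n -> 1 <= nth 0 s k <= (k.+1).*2].

Definition top_rows (i : nat) (s : seq nat) : seq nat := take i s.

Definition dword (s : seq nat) : seq bool :=
  true :: [seq (c \in s) | c <- iota 1 (size s).*2] ++ [:: false].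

Local Open Scope ring_scope.

Definition height (P : seq bool) (x : nat) : int :=
  \sum_(b <- take x P) (if b then 1 else -1).

Definition dyck (m : nat) (P : seq bool) : Prop :=
  [/\ size P = (m.*2)%N,
      forall x, (x <= m.*2)%N -> 0 <= height P x &
      height P (m.*2) = 0].

Definition in_shape (P : seq bool) (c : int * int) : bool :=
  let: (a, b) := c in
  [&& 0 <= b, ~~ odd (absz (a + b)), 0 <= a, a <= (size P)%:Z - 2 &
      b + 1 <= height P (absz (a + 1))].

Definition cell_adj (c c' : int * int) : bool :=
  (`|c.1 - c'.1| == 1%N) && (`|c.2 - c'.2| == 1%N).

Definition ribbon (X : pred (int * int)) : Prop :=
  [/\ exists c, X c,
      (forall x y, X x -> X y ->
         exists p : seq (int * int), [&& path cell_adj x p, all X p & last x p == y]) &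
      forall a b, ~ [&& X (a, b), X (a + 1, b + 1), X (a + 1, b - 1) & X (a + 2, b)]].

Definition dyck_cover (D E : seq bool) : Prop :=
  (forall c, in_shape D c -> in_shape E c) /\
  ribbon (fun c => in_shape E c && ~~ in_shape D c).

(** An n-chain of Dyck shapes D_1 ⊏ ... ⊏ D_n, stored as the list
    [:: D_1; ...; D_n] (so the i-th entry, 0-indexed, has length 2(i+1)). *)
Definition dyck_chain (n : nat) (C : seq (seq bool)) : Prop :=
  [/\ size C = n,
      forall i, (i < n)%N -> dyck i.+1 (nth [::] C i) &
      forall i, (i.+1 < n)%N -> dyck_cover (nth [::] C i) (nth [::] C i.+1)].

Definition rook_to_chain (n : nat) (s : seq nat) : seq (seq bool) :=
  [seq dword (top_rows i s) | i <- iota 0 n].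

From mathcomp Require Import all_boot all_order all_algebra zify.
Import Order.TTheory GRing.Theory Num.Theory.

Set Implicit Arguments.
Unset Strict Implicit.
Unset Printing Implicit Defensive.

(** Adding a bottom row of length 2(i+1) with a dot in column c turns d(R_i)
    into d(R_{i+1}) by appending two down steps and turning into an up step
    the down step that starts at abscissa c.  This raises the path by 2
    exactly on the abscissae x > c, so the cells between the old and the new
    path sit above the abscissae c, ..., 2i: a connected strip without any
    2x2 square, i.e. a ribbon.  Conversely, comparing heights shows that every
    ribbon D ⊏ E arises in this way: the shape of D lies below E, the absence
    of squares bounds the height gap by 2, and connectedness of the ribbon
    prevents the gap from closing once it has opened.  So every chain is
    obtained by adding rows one at a time, and the column of the dot of each
    row is recovered as the column occupied by R_{i+1} but not by R_i, which
    d(R_{i+1}) and d(R_i) record. *)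

Local Open Scope ring_scope.

Lemma height0 P : height P 0 = 0.
Proof. by rewrite /height take0 big_nil. Qed.

Lemma height_nil x : height [::] x = 0.
Proof. by rewrite /height big_nil. Qed.

Lemma height_cons b P x : height (b :: P) x.+1 = (if b then 1 else -1) + height P x.
Proof. by rewrite /height /= big_cons. Qed.

Lemma heightS P x : height P x.+1 =
  height P x + (if (x < size P)%N then (if nth false P x then 1 else -1) else 0).
Proof.
elim: P x => [|b P IH] [|x]; rewrite ?height_cons ?height_nil ?height0 //=.
- by rewrite add0r addr0.
- by rewrite IH ltnS addrA.
Qed.

Lemma heightS_step P x : (x < size P)%N ->
  height P x.+1 = height P x + 1 \/ height P x.+1 = height P x - 1.
Proof. by move=> Hx; rewrite heightS Hx; case: ifP => _; [left|right]. Qed.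

Lemma height_parity P x : (x <= size P)%N -> exists k : int, height P x + x%:Z = 2 * k.
Proof.
elim: x => [|x IH] Hx; first by exists 0; rewrite height0.
have [k Hk] := IH (ltnW Hx).
rewrite heightS Hx; case: ifP => _; [exists (k + 1) | exists k]; lia.
Qed.

Lemma height_oversize P x : (size P <= x)%N -> height P x = height P (size P).
Proof. by move=> Hx; rewrite /height take_oversize // take_size. Qed.

Lemma nth_height P x : (x < size P)%N ->
  nth false P x = (height P x.+1 == height P x + 1).
Proof. by move=> Hx; rewrite heightS Hx; case: ifP => _; lia. Qed.

Lemma eq_from_height P Q : size P = size Q ->
  (forall x, (x <= size P)%N -> height P x = height Q x) -> P = Q.
Proof.
move=> eq_size eq_height; apply: (eq_from_nth (x0 := false) eq_size) => x Hx.
by rewrite !nth_height -?eq_size // !eq_height //; apply: ltnW.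
Qed.

Lemma height_set_nth_true P j x : (j < size P)%N -> ~~ nth false P j ->
  height (set_nth false P j true) x = height P x + (if (j < x)%N then 2 else 0).
Proof.
elim: P j x => [|b P IH] j x //= Hj Pj.
case: x => [|x]; first by rewrite !height0.
case: j Hj Pj => [|j] Hj Pj /=.
- by move: Pj => /negbTE /= ->; rewrite !height_cons; lia.
- by rewrite !height_cons IH // ltnS addrA.
Qed.

Lemma height_cat P Q x : height (P ++ Q) x =
  if (x <= size P)%N then height P x else height P (size P) + height Q (x - size P).
Proof.
elim: P x => [|b P IH] x /=.
- by rewrite height_nil subn0; case: x => [|x] //=; rewrite ?height0; lia.
- case: x => [|x]; first by rewrite !height0.
  by rewrite !height_cons IH ltnS subSS; case: b; case: ifP => _; rewrite ?addrA.
Qed.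

Lemma nth_pad P y : nth false (P ++ [:: false; false]) y = nth false P y.
Proof.
rewrite nth_cat; case: ltnP => // Hy.
by rewrite [RHS]nth_default //; case: (y - _)%N => [|[|[]]].
Qed.

Definition grow_path (P : seq bool) (j : nat) : seq bool :=
  set_nth false (P ++ [:: false; false]) j true.

Lemma nth_grow_path P j x : nth false (grow_path P j) x = (x == j) || nth false P x.
Proof. by rewrite /grow_path nth_set_nth /= nth_pad; case: eqVneq. Qed.

Lemma dyck_size m P : dyck m P -> size P = m.*2.
Proof. by case. Qed.

Lemma height_pad m D : dyck m D -> forall x,
  height (D ++ [:: false; false]) x =
  if (x <= m.*2)%N then height D x else if x == m.*2.+1 then -1 else -2.
Proof.
case=> sizeD _ heightD x; rewrite height_cat sizeD; case: ifP => // Hx.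
rewrite heightD add0r.
have [d ->] : exists d, x = (m.*2 + d.+1)%N by exists (x - m.*2).-1; lia.
rewrite addKn; case: d => [|[|d]].
- by rewrite addn1 eqxx height_cons height0.
- by rewrite ifF ?height_cons ?height0 //; lia.
- by rewrite ifF ?height_cons ?height_oversize //= ?height0; lia.
Qed.

Lemma dyck_height1 m P : (0 < m)%N -> dyck m P -> height P 1 = 1.
Proof.
move=> m_gt0 [sizeP P_ge0 _].
have := @heightS_step P 0 ltac:(lia); have := P_ge0 1%N ltac:(lia).
by rewrite height0; lia.
Qed.

Lemma dyck_height_last m P : dyck m.+1 P -> height P m.*2.+1 = 1.
Proof.
move=> [sizeP P_ge0 P_end].
have := @heightS_step P m.*2.+1 ltac:(lia); have := P_ge0 m.*2.+1 ltac:(lia).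
have -> : m.*2.+2 = m.+1.*2 by lia.
by rewrite P_end; lia.
Qed.

Lemma dyck_height_lt_end m P x : dyck m P -> (x <= m.*2)%N ->
  (x < m.*2)%N \/ height P x = 0.
Proof.
case=> _ _ P_end Hx; case: (ltnP x m.*2) => x_lt; [left | right] => //.
by have -> : x = m.*2 by lia.
Qed.

Lemma size_dword s : size (dword s) = (size s).*2.+2.
Proof. by rewrite /dword /= size_cat size_map size_iota addn1. Qed.

Lemma nth_dword s x : nth false (dword s) x =
  (x == 0%N) || ((0 < x <= (size s).*2)%N && (x \in s)).
Proof.
case: x => [|x] //=; rewrite nth_cat size_map size_iota.
case: ifP => Hx.
- by rewrite (nth_map 0%N) ?size_iota // nth_iota // add1n Hx.
- by case: (x - (size s).*2)%N => [|[]].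
Qed.

Section DwordColumns.

Variable s : seq nat.
Hypothesis s_range : forall y, y \in s -> (0 < y <= (size s).*2)%N.

Lemma mem_dword c : (c \in s) = (0 < c)%N && nth false (dword s) c.
Proof.
rewrite nth_dword; case: (boolP (c \in s)) => [/s_range|]; last by lia.
by rewrite andbT; lia.
Qed.

Lemma dword_rcons c : c \notin s -> (0 < c <= (size s).*2.+2)%N ->
  dword (rcons s c) = grow_path (dword s) c.
Proof.
move=> c_new c_range.
have size_grow : size (grow_path (dword s) c) = (size s).*2.+4.
  by rewrite size_set_nth size_cat size_dword /=; lia.
apply: (eq_from_nth (x0 := false)); first by rewrite size_grow size_dword size_rcons.
move=> x; rewrite size_dword size_rcons => Hx.
rewrite nth_grow_path !nth_dword size_rcons mem_rcons in_cons.
case: (eqVneq x c) => [->|x_neq_c] /=; first by rewrite andbT; lia.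
case: (boolP (x \in s)) => [/s_range|]; rewrite ?andbT ?andbF ?orbF //; lia.
Qed.

End DwordColumns.

Lemma in_shape_Negz P a b : in_shape P (Negz a, b) = false.
Proof. by rewrite /in_shape; case: (0 <= b); case: (~~ odd _). Qed.

Lemma in_shape_Posz P (a : nat) b : in_shape P (Posz a, b) =
  [&& 0 <= b, ~~ odd (absz (a%:Z + b)), a%:Z <= (size P)%:Z - 2
     & b + 1 <= height P a.+1].
Proof.
rewrite /in_shape; have -> : absz (a%:Z + 1) = a.+1 by lia.
by rewrite lez_nat.
Qed.

Section GraphCells.

Variables (X : pred (int * int)) (f : nat -> int) (lo hi : nat).
Hypothesis f_unit_step : forall k, (lo <= k < hi)%N -> absz (f k - f k.+1) = 1%N.
Hypothesis X_graph : forall k, (lo <= k <= hi)%N -> X (Posz k, f k).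

Lemma graph_path_up k d : (lo <= k)%N -> (k + d <= hi)%N ->
  exists p, [&& path cell_adj (Posz k, f k) p, all X p &
                last (Posz k, f k) p == (Posz (k + d), f (k + d))].
Proof.
elim: d k => [|d IH] k Hlo Hhi; first by exists [::]; rewrite addn0 /=.
have [p /and3P[Hp HXp Hlast]] := IH k.+1 ltac:(lia) ltac:(lia).
exists ((Posz k.+1, f k.+1) :: p).
rewrite /= Hp HXp addnS -addSn Hlast X_graph; last by lia.
by rewrite /cell_adj /= !andbT; have := @f_unit_step k ltac:(lia); lia.
Qed.

Lemma graph_path_down k d : (lo <= k)%N -> (k + d <= hi)%N ->
  exists p, [&& path cell_adj (Posz (k + d), f (k + d)) p, all X p &
                last (Posz (k + d), f (k + d)) p == (Posz k, f k)].
Proof.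
elim: d k => [|d IH] k Hlo Hhi; first by exists [::]; rewrite addn0 /=.
have [p /and3P[Hp HXp Hlast]] := IH k ltac:(lia) ltac:(lia).
exists ((Posz (k + d), f (k + d)) :: p).
rewrite /= Hp HXp Hlast X_graph; last by lia.
by rewrite /cell_adj /= !andbT addnS; have := @f_unit_step (k + d) ltac:(lia); lia.
Qed.

Lemma graph_cells_connected k1 k2 : (lo <= k1 <= hi)%N -> (lo <= k2 <= hi)%N ->
  exists p, [&& path cell_adj (Posz k1, f k1) p, all X p &
                last (Posz k1, f k1) p == (Posz k2, f k2)].
Proof.
move=> H1 H2; case: (leqP k1 k2) => Hk.
- have := @graph_path_up k1 (k2 - k1); rewrite subnKC; [apply|]; lia.
- have := @graph_path_down k2 (k1 - k2); rewrite subnKC; [apply|]; lia.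
Qed.

End GraphCells.

Lemma path_cells_cross (X : pred (int * int)) (t : int) p c :
  path cell_adj c p -> all X p -> c.1 < t -> t < (last c p).1 ->
  exists2 d, X d & d.1 = t.
Proof.
elim: p c => [|d p IH] c /=; first lia.
case/andP => /andP[adj_cd _] Hp /andP[Xd Xp] H1 H2.
case: (eqVneq d.1 t) => Hd; first by exists d.
by apply: IH Xp _ H2 => //; lia.
Qed.

Section GrowPath.

Variables (m j : nat) (D : seq bool).
Hypothesis dyckD : dyck m D.
Hypothesis j_range : (0 < j <= m.*2)%N.
Hypothesis Dj : ~~ nth false D j.

Local Notation E := (grow_path D j).

Lemma size_grow_path : size E = m.+1.*2.
Proof. by rewrite size_set_nth size_cat (dyck_size dyckD) /=; lia. Qed.

Lemma height_grow_path x : height E x =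
  (if (x <= m.*2)%N then height D x else if x == m.*2.+1 then -1 else -2)
  + (if (j < x)%N then 2 else 0).
Proof.
rewrite height_set_nth_true ?(height_pad dyckD) ?nth_pad //.
by rewrite size_cat (dyck_size dyckD) /=; lia.
Qed.

Lemma dyck_grow_path : dyck m.+1 E.
Proof.
have [_ D_ge0 D_end] := dyckD.
split; first exact: size_grow_path.
- move=> x Hx; rewrite height_grow_path.
  by case: ifP => H1; [|case: ifP => H2]; case: ifP => H3; try have := D_ge0 x H1; lia.
- by rewrite height_grow_path; case: ifP => H1; [|case: ifP => H2]; case: ifP => H3; lia.
Qed.

Lemma grow_path_shape_sub c : in_shape D c -> in_shape E c.
Proof.
case: c => [[k|k] b]; last by rewrite in_shape_Negz.
rewrite !in_shape_Posz size_grow_path (dyck_size dyckD) => /and4P[b_ge0 parity k_le top].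
rewrite b_ge0 parity /= height_grow_path ifT; last by lia.
by apply/andP; split; [lia | case: ifP => _; lia].
Qed.

Definition ribbon_cell (k : nat) : int * int :=
  (Posz k, (if (k.+1 <= m.*2)%N then height D k.+1 else -1) + 1).

Lemma grow_path_new_cell c : in_shape E c && ~~ in_shape D c <->
  exists2 k, (j <= k <= m.*2)%N & c = ribbon_cell k.
Proof.
have [sizeD D_ge0 D_end] := dyckD.
case: c => [[k|k] b]; last by rewrite in_shape_Negz; split => // [[k' _ []]].
rewrite !in_shape_Posz size_grow_path sizeD height_grow_path /ribbon_cell.
case: (leqP k.+1 m.*2) => Hk.
- have [t Ht] := @height_parity D k.+1 ltac:(lia).
  have := D_ge0 _ Hk.
  have := dyck_height_lt_end dyckD Hk.
  case: (ltnP j k.+1) => Hjk; split.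
  + by case/andP => /and4P[H1 H2 H3 H4] H5; exists k; [lia | rewrite Hk; congr pair; lia].
  + by case=> k' Hk' [<- ->]; rewrite Hk; lia.
  + by case/andP => /and4P[H1 H2 H3 H4] H5; lia.
  + by case=> k' Hk' [Ek _]; lia.
- case: (eqVneq k.+1 m.*2.+1) => Hk2; rewrite ifT; try lia; split.
  + case/andP => /and4P[H1 H2 H3 H4] H5.
    by exists k; [lia | rewrite ifF; [congr pair|]; lia].
  + by case=> k' Hk' [<- ->]; rewrite ifF; lia.
  + by case/andP => /and4P[H1 H2 H3 H4] H5; lia.
  + by case=> k' Hk' [Ek _]; lia.
Qed.

Lemma ribbon_grow_path : ribbon (fun c => in_shape E c && ~~ in_shape D c).
Proof.
have [sizeD D_ge0 D_end] := dyckD.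
split.
- by exists (ribbon_cell m.*2); apply/grow_path_new_cell; exists m.*2 => //; lia.
- move=> x y /grow_path_new_cell [k1 Hk1 ->] /grow_path_new_cell [k2 Hk2 ->].
  pose f k := (ribbon_cell k).2.
  have -> k : ribbon_cell k = (Posz k, f k) by [].
  apply: (graph_cells_connected (lo := j) (hi := m.*2)) => // k Hk.
  + rewrite /f /=; case: (ltnP k.+2 m.*2.+1) => H.
    * rewrite !ifT; try lia.
      by have := heightS D k.+1; rewrite sizeD ifT; [case: ifP => _ ->; lia | lia].
    * have Ek : k.+1 = m.*2 by lia.
      by rewrite Ek leqnn ltnn D_end; lia.
  + by apply/grow_path_new_cell; exists k.
- move=> a b /and4P[_ /grow_path_new_cell [k1 _ [E1 E1']]
                     /grow_path_new_cell [k2 _ [E2 E2']] _].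
  have Ek : k1 = k2 by lia.
  by subst k2; lia.
Qed.

Lemma dyck_cover_grow_path : dyck_cover D E.
Proof. by split; [exact: grow_path_shape_sub | exact: ribbon_grow_path]. Qed.

End GrowPath.

Section CoverIsGrowth.

Variables (m : nat) (D E : seq bool).
Hypothesis m_gt0 : (0 < m)%N.
Hypothesis dyckD : dyck m D.
Hypothesis dyckE : dyck m.+1 E.
Hypothesis coverDE : dyck_cover D E.

Let sizeD : size D = m.*2 := dyck_size dyckD.
Let sizeE : size E = m.+1.*2 := dyck_size dyckE.

Let parityD x : (x <= m.*2)%N -> exists t : int, height D x + x%:Z = 2 * t.
Proof. by move=> Hx; apply: height_parity; rewrite sizeD. Qed.

Let parityE x : (x <= m.+1.*2)%N -> exists t : int, height E x + x%:Z = 2 * t.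
Proof. by move=> Hx; apply: height_parity; rewrite sizeE. Qed.

Let stepD x : (x < m.*2)%N ->
  height D x.+1 = height D x + 1 \/ height D x.+1 = height D x - 1.
Proof. by move=> Hx; apply: heightS_step; rewrite sizeD. Qed.

Let stepE x : (x < m.+1.*2)%N ->
  height E x.+1 = height E x + 1 \/ height E x.+1 = height E x - 1.
Proof. by move=> Hx; apply: heightS_step; rewrite sizeE. Qed.

(** The top cell of the shape of D above abscissa x - 1 lies in the shape of E. *)
Lemma cover_height_ge x : (0 < x < m.*2)%N -> height D x <= height E x.
Proof.
have [_ D_ge0 _] := dyckD; have [_ E_ge0 _] := dyckE.
move=> Hx; case: (lerP (height D x) 0) => Dx; first by have := E_ge0 x ltac:(lia); lia.
have [t Ht] := @parityD x ltac:(lia).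
have := coverDE.1 (Posz x.-1, height D x - 1).
rewrite !in_shape_Posz sizeD sizeE prednK; last by lia.
by move=> sub; have /and4P[_ _ _] := sub ltac:(apply/and4P; split; lia); lia.
Qed.

(** Otherwise the ribbon would contain the four cells of a square above D. *)
Lemma cover_height_le x : (1 < x < m.*2)%N -> height E x <= height D x + 2.
Proof.
have [_ D_ge0 _] := dyckD; have [_ _ no_square] := coverDE.2.
move=> Hx; case: (lerP (height E x) (height D x + 2)) => // gap; exfalso.
have [y Ey] : exists y, x = y.+2 by exists x.-2; lia.
subst x.
have [t Ht] := @parityD y.+2 ltac:(lia); have [t' Ht'] := @parityE y.+2 ltac:(lia).
have := @stepE y.+1 ltac:(lia); have := @stepE y.+2 ltac:(lia).
have := @stepD y.+1 ltac:(lia); have := @stepD y.+2 ltac:(lia).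
have := D_ge0 y.+2 ltac:(lia).
move=> *; apply: (no_square (Posz y) (height D y.+2 + 2)).
have -> : Posz y + 1 = Posz y.+1 by lia.
have -> : Posz y + 2 = Posz y.+2 by lia.
by rewrite !in_shape_Posz sizeD sizeE; lia.
Qed.

Lemma cover_height_gap x : (0 < x <= m.*2)%N ->
  height E x = height D x \/ height E x = height D x + 2.
Proof.
have [_ _ D_end] := dyckD.
move=> Hx; case: (eqVneq x 1%N) => [->|x_neq1].
  by left; rewrite (dyck_height1 m_gt0 dyckD) (dyck_height1 (ltn0Sn m) dyckE).
case: (eqVneq x m.*2) => [->|x_neq_end].
  have := @stepE m.*2 ltac:(lia); have [t Ht] := @parityE m.*2 ltac:(lia).
  have [_ E_ge0 _] := dyckE; have := E_ge0 m.*2 ltac:(lia).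
  by rewrite (dyck_height_last dyckE) D_end; lia.
have := @cover_height_ge x ltac:(lia); have := @cover_height_le x ltac:(lia).
by have [t Ht] := @parityD x ltac:(lia); have [t' Ht'] := @parityE x ltac:(lia); lia.
Qed.

(** A gap opened at x cannot close at x + 1: the ribbon connects a cell left
    of abscissa x + 1 to the cell (2m, 0), so it has a cell at abscissa x + 1,
    and there is none when E and D meet at x + 1. *)
Lemma cover_gap_stays x : (0 < x < m.*2)%N -> height E x = height D x + 2 ->
  height E x.+1 = height D x.+1 + 2.
Proof.
have [_ D_ge0 D_end] := dyckD; have [_ connected _] := coverDE.2.
move=> Hx gap; case: (@cover_height_gap x.+1 ltac:(lia)) => // meet; exfalso.
pose c1 := (Posz x.-1, height D x + 1).
pose c2 : int * int := (Posz m.*2, 0).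
have [t Ht] := @parityD x ltac:(lia).
have Dx_ge0 := D_ge0 x ltac:(lia).
have X1 : in_shape E c1 && ~~ in_shape D c1.
  by rewrite /c1 !in_shape_Posz sizeD sizeE prednK; lia.
have X2 : in_shape E c2 && ~~ in_shape D c2.
  by rewrite /c2 !in_shape_Posz sizeD sizeE (dyck_height_last dyckE); lia.
have [p /and3P[Hp Hall /eqP Hlast]] := connected c1 c2 X1 X2.
have [[a b] Xab /= Ea] := path_cells_cross (t := Posz x) Hp Hall
  ltac:(rewrite /c1 /=; lia) ltac:(rewrite Hlast /c2 /=; lia).
move: Xab; rewrite Ea !in_shape_Posz sizeD sizeE meet.
by have := @dyck_height_lt_end m D x.+1 dyckD ltac:(lia); lia.
Qed.

Lemma cover_height_shift :
  exists2 j, (0 < j <= m.*2)%N & forall x, (x <= m.+1.*2)%N ->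
  height E x = height (D ++ [:: false; false]) x + (if (j < x)%N then 2 else 0).
Proof.
have [_ _ E_end] := dyckE.
have exP : exists k, (m.*2 <= k)%N || (height E k.+1 == height D k.+1 + 2).
  by exists m.*2; rewrite leqnn.
(* j is the last abscissa at which E still meets D. *)
case: (find_ex_minn exP) => j Pj j_min.
have j_le : (j <= m.*2)%N by apply: j_min; rewrite leqnn.
have j_gt0 : (0 < j)%N.
  move: Pj; case: (posnP j) => [->|//].
  by rewrite (dyck_height1 m_gt0 dyckD) (dyck_height1 (ltn0Sn m) dyckE); lia.
have before y : (0 < y <= j)%N -> height E y = height D y.
  move=> Hy; have := @cover_height_gap y ltac:(lia).
  case: (boolP ((m.*2 <= y.-1)%N || (height E y.-1.+1 == height D y.-1.+1 + 2))).
    by move=> /j_min; lia.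
  by rewrite prednK; lia.
have after y : (j < y <= m.*2)%N -> height E y = height D y + 2.
  elim: y => [|y IH] Hy; first by lia.
  case: (eqVneq y j) => [->|y_neq_j]; first by move: Pj; lia.
  by apply: cover_gap_stays; [lia | apply: IH; lia].
exists j => [|x Hx]; first lia.
rewrite (height_pad dyckD).
case: (posnP x) => [->|x_gt0]; first by rewrite !height0.
case: (leqP x j) => Hxj; first by rewrite before ?ifT ?addr0 //; lia.
case: (leqP x m.*2) => Hxm; first by rewrite after; lia.
case: (eqVneq x m.*2.+1) => [->|x_neq]; first by rewrite (dyck_height_last dyckE); lia.
have -> : x = m.+1.*2 by lia.
by rewrite E_end; lia.
Qed.

Lemma cover_grow_path : exists2 j,
  (0 < j <= m.*2)%N && ~~ nth false D j & E = grow_path D j.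
Proof.
have [j j_range shift] := cover_height_shift.
have Dj : ~~ nth false D j.
  have := shift j.+1 ltac:(lia); have := shift j ltac:(lia).
  rewrite ltnSn ltnn -nth_pad nth_height; last by rewrite size_cat sizeD /=; lia.
  by have := @stepE j ltac:(lia); lia.
exists j; first by rewrite j_range.
apply: eq_from_height; first by rewrite (size_grow_path dyckD j_range Dj) sizeE.
move=> x Hx; rewrite /grow_path height_set_nth_true ?nth_pad //.
  by rewrite shift // -sizeE.
by rewrite size_cat sizeD /=; lia.
Qed.

End CoverIsGrowth.

Local Close Scope ring_scope.

Lemma rook_placement_range k s : rook_placement k s ->
  forall y, y \in s -> 0 < y <= k.*2.
Proof.
case=> size_s _ s_col y y_in.
have in_rows : index y s < k by rewrite -size_s index_mem.
by have := s_col _ in_rows; rewrite nth_index //; lia.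
Qed.

Lemma rook_placement_mem_dword k s c : rook_placement k s ->
  (c \in s) = (0 < c) && nth false (dword s) c.
Proof.
move=> rs; have [size_s _ _] := rs; apply: mem_dword => y.
by rewrite size_s; apply: rook_placement_range.
Qed.

Lemma rook_placement_take k s i : rook_placement k s -> i <= k ->
  rook_placement i (take i s).
Proof.
case=> size_s uniq_s s_col Hi; split.
- by rewrite size_takel // size_s.
- exact: take_uniq.
- by move=> x Hx; rewrite nth_take //; apply: s_col; lia.
Qed.

Lemma rook_placement_rcons k s c : rook_placement k.+1 (rcons s c) <->
  [/\ rook_placement k s, c \notin s & 0 < c <= k.+1.*2].
Proof.
split.
- case; rewrite size_rcons rcons_uniq => -[size_s] /andP[c_new uniq_s] s_col.
  split=> //; last by have := s_col k; rewrite nth_rcons size_s ltnn eqxx; apply.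
  split=> // x Hx; have := s_col x; rewrite nth_rcons size_s Hx; apply; lia.
- case=> -[size_s uniq_s s_col] c_new c_range; split.
  + by rewrite size_rcons size_s.
  + by rewrite rcons_uniq c_new.
  + move=> x Hx; rewrite nth_rcons size_s; case: (ltnP x k) => x_lt; first exact: s_col.
    have -> : x = k by lia.
    by rewrite eqxx.
Qed.

Lemma rook_placement_dword_rcons k s c : rook_placement k.+1 (rcons s c) ->
  (0 < c <= k.+1.*2) && ~~ nth false (dword s) c /\
  dword (rcons s c) = grow_path (dword s) c.
Proof.
case/rook_placement_rcons=> rs c_new c_range; have [size_s _ _] := rs.
split; first by move: c_new; rewrite c_range (rook_placement_mem_dword c rs); lia.
apply: dword_rcons => //; last by rewrite size_s.
by rewrite size_s; apply: rook_placement_range.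
Qed.

Lemma rook_placement_new_column k s i c : rook_placement k s -> i < k ->
  (c \in take i.+1 s) && (c \notin take i s) = (c == nth 0 s i).
Proof.
move=> rs Hi; have [size_s _ _] := rs.
have := rook_placement_take rs Hi; rewrite (take_nth 0) ?size_s //.
case/rook_placement_rcons=> _ new_col _.
rewrite mem_rcons in_cons; case: eqVneq => [->|_] /=; [exact: new_col | exact: andbN].
Qed.

Lemma dyck_dword_nil : dyck 1 (dword [::]).
Proof.
split=> //; last by rewrite /= !height_cons height0.
by move=> [|[|[|x]]] Hx //; rewrite ?height0 ?height_cons ?height0 ?height_nil.
Qed.

Lemma dyck1_dword_nil P : dyck 1 P -> P = dword [::].
Proof.
case=> size_P P_ge0 P_end; case: P size_P P_ge0 P_end => [|a [|b []]] //= _ P_ge0.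
have := P_ge0 1 isT; rewrite !height_cons !height0 /dword /=.
by case: a {P_ge0}; case: b => //=; lia.
Qed.

Lemma size_rook_to_chain n s : size (rook_to_chain n s) = n.
Proof. by rewrite size_map size_iota. Qed.

Lemma nth_rook_to_chain n s i : i < n ->
  nth [::] (rook_to_chain n s) i = dword (take i s).
Proof. by move=> Hi; rewrite (nth_map 0) ?size_iota // nth_iota. Qed.

Lemma rook_to_chain_rcons n s c : size s = n ->
  rook_to_chain n.+2 (rcons s c) = rcons (rook_to_chain n.+1 s) (dword (rcons s c)).
Proof.
move=> size_s; rewrite /rook_to_chain /top_rows.
have -> : iota 0 n.+2 = rcons (iota 0 n.+1) n.+1 by rewrite -cats1 -addn1 iotaD.
rewrite map_rcons take_oversize ?size_rcons ?size_s //; congr rcons.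
apply/eq_in_map => i; rewrite mem_iota => /andP[_ Hi].
by rewrite -cats1 takel_cat // size_s.
Qed.

Lemma dyck_chain_take n i C : i <= n -> dyck_chain n C -> dyck_chain i (take i C).
Proof.
move=> Hi [size_C C_dyck C_cover]; split.
- by rewrite size_takel // size_C.
- by move=> x Hx; rewrite nth_take //; apply: C_dyck; lia.
- by move=> x Hx; rewrite !nth_take //; [apply: C_cover; lia | lia].
Qed.

Lemma rook_placement_take_grow k s i : rook_placement k s -> i < k ->
  exists2 c, (0 < c <= i.+1.*2) && ~~ nth false (dword (take i s)) c &
             dword (take i.+1 s) = grow_path (dword (take i s)) c.
Proof.
move=> rs Hi; have [size_s _ _] := rs.
have := rook_placement_take rs Hi; rewrite (take_nth 0) ?size_s //.
by case/rook_placement_dword_rcons; exists (nth 0 s i).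
Qed.

Lemma rook_to_chain_dyck_chain k s : rook_placement k s ->
  dyck_chain k.+1 (rook_to_chain k.+1 s).
Proof.
move=> rs.
have dyck_take i : i <= k -> dyck i.+1 (dword (take i s)).
  elim: i => [|i IH] Hi; first by rewrite take0; exact: dyck_dword_nil.
  have [c /andP[c_range c_new] ->] := rook_placement_take_grow rs Hi.
  exact: dyck_grow_path (IH (ltnW Hi)) c_range c_new.
split; first exact: size_rook_to_chain.
- by move=> i Hi; rewrite nth_rook_to_chain //; apply: dyck_take.
- move=> i Hi; rewrite !nth_rook_to_chain //; last by lia.
  have [c /andP[c_range c_new] ->] := rook_placement_take_grow rs Hi.
  exact: dyck_cover_grow_path (dyck_take i (ltnW Hi)) c_range c_new.
Qed.

Lemma rook_to_chain_inj k s1 s2 : rook_placement k s1 -> rook_placement k s2 ->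
  rook_to_chain k.+1 s1 = rook_to_chain k.+1 s2 -> s1 = s2.
Proof.
move=> rs1 rs2 eq_chain; have [size_s1 _ _] := rs1; have [size_s2 _ _] := rs2.
have mem_take i : i <= k -> take i s1 =i take i s2.
  move=> Hi c; have := congr1 (nth [::] ^~ i) eq_chain.
  rewrite !nth_rook_to_chain // => eq_dword.
  by rewrite (rook_placement_mem_dword c (rook_placement_take rs1 Hi)) eq_dword
             -(rook_placement_mem_dword c (rook_placement_take rs2 Hi)).
apply: (eq_from_nth (x0 := 0)); first by rewrite size_s1 size_s2.
move=> i; rewrite size_s1 => Hi; apply/eqP.
rewrite -(rook_placement_new_column _ rs2 Hi) -mem_take // -(mem_take i) 1?ltnW //.
by rewrite (rook_placement_new_column _ rs1 Hi).
Qed.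

Lemma rook_to_chain_surj k C : dyck_chain k.+1 C ->
  exists s, rook_placement k s /\ rook_to_chain k.+1 s = C.
Proof.
elim: k C => [|k IH] C chainC; have [size_C C_dyck C_cover] := chainC.
  exists [::]; split; first by split.
  case: C size_C C_dyck {C_cover chainC} => [|D [|]] //= _ C_dyck.
  by rewrite /rook_to_chain /= -(dyck1_dword_nil (C_dyck 0 isT)).
have [s' [rs' chain_s']] := IH _ (dyck_chain_take (leqnSn k.+1) chainC).
have [size_s' _ _] := rs'.
have last_s' : nth [::] C k = dword s'.
  rewrite -(nth_take _ (ltnSn k)) -chain_s' nth_rook_to_chain //.
  by rewrite take_oversize // size_s'.
have [j /andP[j_range j_new] E_grow] := cover_grow_path (ltn0Sn k)
  (C_dyck k (ltnW (ltnSn _))) (C_dyck k.+1 (ltnSn _)) (C_cover k (ltnSn _)).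
rewrite last_s' in j_new E_grow.
have rs : rook_placement k.+1 (rcons s' j).
  apply/rook_placement_rcons; split=> //.
  by rewrite (rook_placement_mem_dword j rs') negb_and j_new orbT.
exists (rcons s' j); split=> //.
rewrite rook_to_chain_rcons // chain_s' (rook_placement_dword_rcons rs).2 -E_grow.
by rewrite -take_nth ?size_C // take_oversize ?size_C.
Qed.

Theorem mainTheorem3 (n : nat) (hn : 1 <= n) :
  (forall s, rook_placement n.-1 s -> dyck_chain n (rook_to_chain n s)) /\
  (forall s1 s2, rook_placement n.-1 s1 -> rook_placement n.-1 s2 ->
     rook_to_chain n s1 = rook_to_chain n s2 -> s1 = s2) /\
  (forall C, dyck_chain n C -> exists s, rook_placement n.-1 s /\ rook_to_chain n s = C).
Proof.
case: n hn => // k _ /=; split; [|split].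
- exact: rook_to_chain_dyck_chain.
- exact: rook_to_chain_inj.
- exact: rook_to_chain_surj.
Qed.
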